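(* Let $K$ be a field and $P$ an arbitrary poset. An idempotent $\alpha\in FI(P)$ is primitive if and only if there exist $x\in P$ and an invertible $\beta\in FI(P)$ with $\alpha=\beta^{-1}\delta_x^P\beta$. In particular, the diagonal primitive idempotents of $FI(P)$ are exactly the elements $\delta_x^P$, $x\in P$.
   Context: $K$ is a field, $P$ an arbitrary poset. $I(P)$ is the set of functions $\alpha$ assigning to each pair $x\le y$ in $P$ a value $\alpha(x,y)\in K$. An element $\alpha\in I(P)$ is a finitary series if for all $x<y$ in $P$ there are only finitely many pairs $(u,v)$ with $x\le u<v\le y$ and $\alpha(u,v)\neq0$; $FI(P)$ is the set of finitary series. $FI(P)$ is an associative $K$-algebra under pointwise addition and convolution $(\alpha\beta)(x,y)=\sum_{x\le z\le y}\alpha(x,z)\beta(z,y)$. An element is diagonal if $\alpha(x,y)=0$ for $x\ne y$. For $x\in P$, $\delta_x^P\in FI(P)$ is defined by $\delta_x^P(u,v)=1$ if $u=v=x$ and $0$ otherwise. A nonzero idempotent $\alpha$ is primitive if whenever $\varepsilon$ is an idempotent with $\alpha\varepsilon=\varepsilon\alpha=\alpha$ … the paper's definition: whenever $\varepsilon$ is an idempotent with $\varepsilon\alpha=\alpha\varepsilon=\varepsilon$, then $\varepsilon=0$ or $\varepsilon=\alpha$. *)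

From HB Require Import structures.
From mathcomp Require Import all_boot all_order all_algebra.
From Stdlib Require Import ClassicalEpsilon.
Set Implicit Arguments. Unset Strict Implicit. Unset Printing Implicit Defensive.
Import Order.Theory GRing.Theory.
Local Open Scope ring_scope.

Section FI.
Variables (d : Order.disp_t) (P : porderType d) (K : fieldType).

(* An element of I(P): values alpha x y for x <= y (values at other pairs
   are irrelevant; all comparisons below only look at pairs x <= y). *)
Definition ser := P -> P -> K.

Definition ser_eq (a b : ser) : Prop :=
  forall x y : P, (x <= y)%O -> a x y = b x y.

Definition finitary (a : ser) : Prop :=
  forall x y : P, (x < y)%O -> exists s : seq (P * P),
    forall u v : P, (x <= u)%O -> (u < v)%O -> (v <= y)%O -> a u v != 0 ->
      (u, v) \in s.

Definition conv_support (a b : ser) (x y : P) (s : seq P) : Prop :=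
  [/\ uniq s, all (fun z => (x <= z)%O && (z <= y)%O) s &
      forall z : P, (x <= z)%O -> (z <= y)%O -> a x z * b z y != 0 -> z \in s].

(* convolution (a b)(x,y) = sum_{x<=z<=y} a(x,z) b(z,y); the sum has finite
   support when a, b are finitary, and is computed over a chosen support. *)
Definition conv (a b : ser) : ser := fun x y =>
  let s := epsilon (inhabits [::]) (conv_support a b x y) in
  \sum_(z <- s) a x z * b z y.

Definition ser0 : ser := fun _ _ => 0.
Definition ser1 : ser := fun u v => if u == v then 1 else 0.
Definition delta (x : P) : ser := fun u v => if (u == x) && (v == x) then 1 else 0.

Definition diagonal (a : ser) : Prop := forall x y : P, x != y -> a x y = 0.

Definition fi_idempotent (a : ser) : Prop := finitary a /\ ser_eq (conv a a) a.

Definition fi_primitive (a : ser) : Prop :=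
  [/\ fi_idempotent a, ~ ser_eq a ser0 &
      forall e : ser, fi_idempotent e -> ser_eq (conv e a) e -> ser_eq (conv a e) e ->
        ser_eq e ser0 \/ ser_eq e a].

Definition inverse_of (b c : ser) : Prop :=
  [/\ finitary b, finitary c, ser_eq (conv b c) ser1 & ser_eq (conv c b) ser1].

End FI.

From HB Require Import structures.
From mathcomp Require Import all_boot all_order all_algebra.
From mathcomp Require Import boolp.
From Stdlib Require Import ClassicalEpsilon.
Set Implicit Arguments. Unset Strict Implicit. Unset Printing Implicit Defensive.
Import Order.Theory GRing.Theory.
Local Open Scope ring_scope.

(* Two facts about this ring carry the argument:
   - an element whose diagonal entries are all 1 is a unit: it is 1 - nu with
     nu zero on the diagonal, and the geometric series of nu is entrywise
     finite;
   - for an idempotent a with diagonal part e, b := e a + (1 - e)(1 - a) has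
     diagonal entries 1, and in any ring b a = e a = e b, so a = b^-1 e b.
   Conjugation preserves primitivity in any ring, so a is primitive iff e is;
   a diagonal primitive idempotent is some delta_x, and every delta_x is
   primitive since delta_x FI(P) delta_x = K delta_x. *)

Section SupportSums.
Variable R : nmodType.

Lemma sum_neq0_witness (T : eqType) (F : T -> R) (s : seq T) (Q : pred T) :
  \sum_(t <- s | Q t) F t != 0 -> exists t, [/\ t \in s, Q t & F t != 0].
Proof.
have [/hasP[t ts /andP[Qt Ft]] _|] := boolP (has (fun t => Q t && (F t != 0)) s).
  by exists t.
rewrite -all_predC => /allP Hs; rewrite big1_seq ?eqxx // => t /andP[Qt ts].
by have := Hs t ts; rewrite /= Qt negbK => /eqP.
Qed.

Lemma sum_support_eq (T : eqType) (F : T -> R) (s t : seq T) (Q : pred T) :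
  uniq s -> uniq t -> {subset s <= Q} -> {subset t <= Q} ->
  (forall z, Q z -> F z != 0 -> (z \in s) && (z \in t)) ->
  \sum_(z <- s) F z = \sum_(z <- t) F z.
Proof.
move=> us ut sQ tQ supp.
have sum_nz r : \sum_(z <- r) F z = \sum_(z <- [seq z <- r | F z != 0]) F z.
  rewrite big_filter [LHS](bigID (fun z => F z != 0)) /=.
  by rewrite [X in _ + X]big1 ?addr0 // => z /negPn/eqP.
rewrite sum_nz [RHS]sum_nz; apply/perm_big/uniq_perm; rewrite ?filter_uniq //.
move=> z; rewrite !mem_filter; apply/andP/andP => -[nz zin]; split=> //.
- by have /andP[] := supp z (sQ z zin) nz.
- by have /andP[] := supp z (tQ z zin) nz.
Qed.

Lemma sum_nat_trunc m n (f : nat -> R) :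
  (forall k, (m <= k)%N -> f k = 0) -> (forall k, (n <= k)%N -> f k = 0) ->
  \sum_(0 <= k < m) f k = \sum_(0 <= k < n) f k.
Proof.
have extend m' n' : (m' <= n')%N -> (forall k, (m' <= k)%N -> f k = 0) ->
    \sum_(0 <= k < m') f k = \sum_(0 <= k < n') f k.
  move=> le_mn f0; rewrite [RHS](big_cat_nat (leq0n m') le_mn) /=.
  rewrite [X in _ = _ + X]big_nat_cond [X in _ = _ + X]big1 ?addr0 //.
  by move=> k /andP[/andP[/f0]].
move=> fm fn; case: (leqP m n) => [|/ltnW] le; first exact: extend.
by rewrite (extend n m).
Qed.

End SupportSums.

Lemma count_lt_sub (T : eqType) (p q : pred T) (s : seq T) (w : T) :
  subpred p q -> w \in s -> q w -> ~~ p w -> (count p s < count q s)%N.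
Proof.
move=> pq; elim: s => // a s IH; rewrite inE => /orP[/eqP <-|ws] qw npw /=.
  by rewrite qw (negbTE npw) add0n add1n ltnS sub_count.
have := IH ws qw npw; rewrite -(ltn_add2l (p a)) => /leq_trans; apply.
by rewrite leq_add2r; case: (p a) (pq a) => // ->.
Qed.

Section Convolution.
Variables (d : Order.disp_t) (P : porderType d) (K : fieldType).
Implicit Types (a b c : ser P K) (x y z u v w : P).

Lemma mulf_neq0P (r t : K) : r * t != 0 -> (r != 0) && (t != 0).
Proof. by rewrite mulf_eq0 negb_or. Qed.

(* The value of a convolution can be computed over any duplicate-free list
   containing the support of the summand; this frees us from the choice made
   by [epsilon] in the definition of [conv]. *)
Lemma conv_sum a b x y (s : seq P) : uniq s ->
  (forall z, (x <= z)%O -> (z <= y)%O -> a x z * b z y != 0 -> z \in s) ->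
  conv a b x y = \sum_(z <- s | (x <= z <= y)%O) a x z * b z y.
Proof.
move=> us supp_s.
have hs : conv_support a b x y [seq z <- s | (x <= z <= y)%O].
  split; first by rewrite filter_uniq.
  - by apply/allP => z; rewrite mem_filter => /andP[].
  - by move=> z xz zy nz; rewrite mem_filter xz zy supp_s.
have [u0 a0 c0] : conv_support a b x y (epsilon (inhabits [::]) (conv_support a b x y)).
  by apply: epsilon_spec; exists [seq z <- s | (x <= z <= y)%O].
rewrite /conv -[RHS]big_filter; case: hs => u1 a1 c1.
apply: (sum_support_eq (Q := fun z => (x <= z <= y)%O)) => //.
- by move=> z zs; move/allP: a0; apply.
- by move=> z zs; move/allP: a1; apply.
- by move=> z /andP[xz zy] nz; rewrite c0 // c1.
Qed.

Definition covers a x y (S : seq P) := forall u v, (x <= u)%O -> (u < v)%O ->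
  (v <= y)%O -> a u v != 0 -> (u \in S) && (v \in S).

Lemma finitary_cover a x y : finitary a -> exists S, covers a x y S.
Proof.
move=> fa; have [xy|nxy] := boolP (x < y)%O.
  have [s Hs] := fa x y xy.
  exists ([seq p.1 | p <- s] ++ [seq p.2 | p <- s]) => u v xu uv vy nz.
  by rewrite !mem_cat !(map_f _ (Hs u v xu uv vy nz)) orbT.
exists [::] => u v xu uv vy; case/negP: nxy.
exact: le_lt_trans xu (lt_le_trans uv vy).
Qed.

Lemma cover_finitary a : (forall x y, exists S, covers a x y S) -> finitary a.
Proof.
move=> H x y _; have [S HS] := H x y.
exists [seq (u, v) | u <- S, v <- S] => u v xu uv vy nz.
by have /andP[us vs] := HS u v xu uv vy nz; apply: allpairs_f.
Qed.

Lemma covers_subset a x y S T : covers a x y S -> {subset S <= T} -> covers a x y T.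
Proof.
by move=> H ST u v xu uv vy nz; have /andP[/ST -> /ST ->] := H u v xu uv vy nz.
Qed.

Lemma cover_left a x y S z : covers a x y S -> (x <= z)%O -> (z <= y)%O ->
  a x z != 0 -> z \in x :: S.
Proof.
move=> H xz zy nz; rewrite inE; have [//|ne] /= := eqVneq z x.
have xz' : (x < z)%O by rewrite lt_def ne.
by have /andP[] := H x z (lexx x) xz' zy nz.
Qed.

Lemma cover_right a x y S z : covers a x y S -> (x <= z)%O -> (z <= y)%O ->
  a z y != 0 -> z \in y :: S.
Proof.
move=> H xz zy nz; rewrite inE; have [//|ne] /= := eqVneq z y.
have zy' : (z < y)%O by rewrite lt_def eq_sym ne.
by have /andP[] := H z y xz zy' (lexx y) nz.
Qed.

Lemma conv_suml a b x y S : covers a x y S ->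
  conv a b x y = \sum_(z <- undup (x :: S) | (x <= z <= y)%O) a x z * b z y.
Proof.
move=> H; apply: conv_sum; first exact: undup_uniq.
by move=> z xz zy /mulf_neq0P/andP[nz _]; rewrite mem_undup (cover_left H).
Qed.

Lemma conv_sumr a b x y S : covers b x y S ->
  conv a b x y = \sum_(z <- undup (y :: S) | (x <= z <= y)%O) a x z * b z y.
Proof.
move=> H; apply: conv_sum; first exact: undup_uniq.
by move=> z xz zy /mulf_neq0P/andP[_ nz]; rewrite mem_undup (cover_right H).
Qed.

Lemma conv_neq0 a b u v : finitary a -> conv a b u v != 0 ->
  exists w, [/\ (u <= w)%O, (w <= v)%O, a u w != 0 & b w v != 0].
Proof.
move=> fa; have [S HS] := finitary_cover u v fa; rewrite (conv_suml _ HS).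
by case/sum_neq0_witness => w [_ /andP[uw wv] /mulf_neq0P/andP[]]; exists w.
Qed.


Lemma ser_eq_sym a b : ser_eq a b -> ser_eq b a.
Proof. by move=> E x y xy; rewrite E. Qed.

Lemma ser_eq_trans a b c : ser_eq a b -> ser_eq b c -> ser_eq a c.
Proof. by move=> E F x y xy; rewrite E ?F. Qed.

Lemma finitary_eq a a' : ser_eq a a' -> finitary a -> finitary a'.
Proof.
move=> E fa; apply: cover_finitary => x y; have [S HS] := finitary_cover x y fa.
by exists S => u v xu uv vy; rewrite -E ?(ltW uv) //; apply: HS.
Qed.

Lemma conv_eq a a' b b' : finitary a -> ser_eq a a' -> ser_eq b b' ->
  ser_eq (conv a b) (conv a' b').
Proof.
move=> fa Ea Eb x y xy; have [S HS] := finitary_cover x y fa.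
have HS' : covers a' x y S by move=> u v xu uv vy; rewrite -Ea ?(ltW uv) //; apply: HS.
rewrite (conv_suml _ HS) (conv_suml _ HS').
by apply: eq_bigr => z /andP[xz zy]; rewrite Ea ?Eb.
Qed.

(* FI(P) is closed under convolution: a nonzero entry (u, v) of a b comes
   from a nonzero entry (u, w) of a and (w, v) of b. *)
Lemma conv_finitary a b : finitary a -> finitary b -> finitary (conv a b).
Proof.
move=> fa fb; apply: cover_finitary => x y.
have [Sa Ha] := finitary_cover x y fa; have [Sb Hb] := finitary_cover x y fb.
exists (Sa ++ Sb) => u v xu uv vy nz; rewrite !mem_cat.
have [w [uw wv auw bwv]] := conv_neq0 fa nz.
have xw := le_trans xu uw; have wy := le_trans wv vy.
apply/andP; split.
  have [ewu|nwu] := eqVneq w u.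
    by move: bwv; rewrite ewu => /(Hb u v xu uv vy)/andP[-> _]; rewrite orbT.
  have uw' : (u < w)%O by rewrite lt_def nwu.
  by have /andP[-> _] := Ha u w xu uw' wy auw.
have [ewv|nwv] := eqVneq w v.
  by move: auw; rewrite ewv => /(Ha u v xu uv vy)/andP[_ ->].
have wv' : (w < v)%O by rewrite lt_def eq_sym nwv.
by have /andP[_ ->] := Hb w v xw wv' vy bwv; rewrite orbT.
Qed.

Lemma sum_interval_exchange (L : seq P) (F : P -> P -> K) x y :
  \sum_(z <- L | (x <= z <= y)%O) \sum_(w <- L | (x <= w <= z)%O) F z w =
  \sum_(w <- L | (x <= w <= y)%O) \sum_(z <- L | (w <= z <= y)%O) F z w.
Proof.
rewrite (exchange_big_dep (fun w => (x <= w <= y)%O)) /=; last first.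
  by move=> z w /andP[_ zy] /andP[xw wz]; rewrite xw (le_trans wz zy).
apply: eq_bigr => w /andP[xw wy]; apply: eq_bigl => z.
apply/idP/idP => [/andP[/andP[_ zy] /andP[_ wz]]|/andP[wz zy]]; first by rewrite wz.
by rewrite (le_trans xw wz) zy xw wz.
Qed.

Lemma convA a b c : finitary a -> finitary c ->
  ser_eq (conv (conv a b) c) (conv a (conv b c)).
Proof.
move=> fa fc x y xy.
have [Sa Ha] := finitary_cover x y fa; have [Sc Hc] := finitary_cover x y fc.
set L := undup (x :: y :: Sa ++ Sc); have uL : uniq L := undup_uniq _.
have inL_a z : z \in x :: Sa -> z \in L.
  by rewrite mem_undup !inE mem_cat => /orP[->|->]; rewrite ?orbT.
have inL_c z : z \in y :: Sc -> z \in L.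
  by rewrite mem_undup !inE mem_cat => /orP[->|->]; rewrite ?orbT.
rewrite (conv_sum uL); last first.
  by move=> z xz zy /mulf_neq0P/andP[_ nz]; rewrite inL_c // (cover_right Hc).
rewrite (conv_sum uL); last first.
  by move=> z xz zy /mulf_neq0P/andP[nz _]; rewrite inL_a // (cover_left Ha).
transitivity (\sum_(z <- L | (x <= z <= y)%O) \sum_(w <- L | (x <= w <= z)%O)
                 a x w * b w z * c z y).
  apply: eq_bigr => z /andP[xz zy]; rewrite (conv_sum uL) ?big_distrl //.
  move=> w xw wz /mulf_neq0P/andP[nz _].
  by rewrite inL_a // (cover_left Ha xw (le_trans wz zy)).
rewrite sum_interval_exchange; apply: eq_bigr => w /andP[xw wy].
rewrite (conv_sum uL) ?big_distrr; last first.
  move=> z wz zy /mulf_neq0P/andP[_ nz].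
  by rewrite inL_c // (cover_right Hc (le_trans xw wz)).
by apply: eq_bigr => z _; rewrite -mulrA.
Qed.

Lemma conv_diagl a b u v : diagonal a -> (u <= v)%O -> conv a b u v = a u u * b u v.
Proof.
move=> da uv; rewrite (conv_sum (s := [:: u])) //.
  by rewrite big_cons big_nil lexx uv addr0.
move=> z _ _ /mulf_neq0P/andP[nz _]; rewrite inE eq_sym.
by apply: contraNT nz => /da ->.
Qed.

Lemma conv_diagr a b u v : diagonal b -> (u <= v)%O -> conv a b u v = a u v * b v v.
Proof.
move=> db uv; rewrite (conv_sum (s := [:: v])) //.
  by rewrite big_cons big_nil lexx uv addr0.
move=> z _ _ /mulf_neq0P/andP[_ nz]; rewrite inE.
by apply: contraNT nz => /db ->.
Qed.

Lemma conv_diag_entry a b x : conv a b x x = a x x * b x x.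
Proof.
rewrite (conv_sum (s := [:: x])) ?big_cons ?big_nil ?lexx ?addr0 //.
by move=> z xz zx _; rewrite inE eq_le zx xz.
Qed.

Definition ser_add a b : ser P K := fun x y => a x y + b x y.
Definition ser_opp a : ser P K := fun x y => - a x y.

Lemma covers_add a b x y S T : covers a x y S -> covers b x y T ->
  covers (ser_add a b) x y (S ++ T).
Proof.
move=> Ha Hb u v xu uv vy nz; rewrite !mem_cat.
have [a0|/(Ha u v xu uv vy)/andP[-> ->] //] := eqVneq (a u v) 0.
move: nz; rewrite /ser_add a0 add0r => /(Hb u v xu uv vy)/andP[-> ->].
by rewrite !orbT.
Qed.

Lemma ser_add_finitary a b : finitary a -> finitary b -> finitary (ser_add a b).
Proof.
move=> fa fb; apply: cover_finitary => x y.
have [Sa Ha] := finitary_cover x y fa; have [Sb Hb] := finitary_cover x y fb.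
by exists (Sa ++ Sb); apply: covers_add.
Qed.

Lemma ser_opp_finitary a : finitary a -> finitary (ser_opp a).
Proof.
move=> fa; apply: cover_finitary => x y; have [S HS] := finitary_cover x y fa.
by exists S => u v xu uv vy; rewrite oppr_eq0; apply: HS.
Qed.

Lemma conv_addl a b c : finitary a -> finitary b ->
  ser_eq (conv (ser_add a b) c) (ser_add (conv a c) (conv b c)).
Proof.
move=> fa fb x y xy.
have [Sa Ha] := finitary_cover x y fa; have [Sb Hb] := finitary_cover x y fb.
have sub_l : {subset Sa <= Sa ++ Sb} by move=> z; rewrite mem_cat => ->.
have sub_r : {subset Sb <= Sa ++ Sb} by move=> z; rewrite mem_cat orbC => ->.
rewrite /ser_add (conv_suml _ (covers_add Ha Hb)).
rewrite (conv_suml _ (covers_subset Ha sub_l)) (conv_suml _ (covers_subset Hb sub_r)).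
by rewrite -big_split; apply: eq_bigr => z _; rewrite mulrDl.
Qed.

Lemma conv_addr a b c : finitary a ->
  ser_eq (conv a (ser_add b c)) (ser_add (conv a b) (conv a c)).
Proof.
move=> fa x y xy; have [S HS] := finitary_cover x y fa.
by rewrite /ser_add !(conv_suml _ HS) -big_split; apply: eq_bigr => z _; rewrite mulrDr.
Qed.

End Convolution.

Section FIRing.
Variables (d : Order.disp_t) (P : porderType d) (K : fieldType).
Implicit Types (a b c : ser P K) (x y u v : P).

Lemma diagonal_finitary a : diagonal a -> finitary a.
Proof.
move=> da; apply: cover_finitary => x y.
by exists [::] => u v _ uv _; rewrite da ?eqxx // lt_eqF.
Qed.

Lemma ser0_diagonal : diagonal (@ser0 _ P K). Proof. by []. Qed.

Lemma ser1_diagonal : diagonal (@ser1 _ P K).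
Proof. by move=> x y /negbTE; rewrite /ser1 => ->. Qed.

Lemma delta_diagonal x : diagonal (delta K x).
Proof.
move=> u v; apply: contraNeq; rewrite /delta.
by case: (u =P x) => [->|_]; case: (v =P x) => [->|_]; rewrite ?eqxx.
Qed.

(* To turn FI(P) into a ring type, each class of [ser_eq] is represented by
   its unique member vanishing outside the pairs x <= y. *)
Definition ser_normal a := forall x y, ~~ (x <= y)%O -> a x y = 0.

Record fi := FI { fval : ser P K; fvalP : finitary fval /\ ser_normal fval }.

Definition normalize a : ser P K := fun x y => if (x <= y)%O then a x y else 0.

Lemma normalizeE a : ser_eq (normalize a) a.
Proof. by move=> x y xy; rewrite /normalize xy. Qed.

Lemma normalize_normal a : ser_normal (normalize a).
Proof. by move=> x y /negbTE xy; rewrite /normalize xy. Qed.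

Definition mkfi a (fa : finitary a) : fi :=
  FI (conj (finitary_eq (ser_eq_sym (normalizeE a)) fa) (normalize_normal a)).

Lemma mkfiE a (fa : finitary a) : ser_eq (fval (mkfi fa)) a.
Proof. exact: normalizeE. Qed.

Lemma fval_finitary (p : fi) : finitary (fval p). Proof. exact: (fvalP p).1. Qed.

Lemma fi_ext (p q : fi) : ser_eq (fval p) (fval q) -> p = q.
Proof.
case: p q => [p [fp np]] [q [fq nq]] /= E.
have epq : p = q.
  apply/funext => x; apply/funext => y.
  by have [/E //|nxy] := boolP (x <= y)%O; rewrite np ?nq.
by subst q; congr FI; apply: Prop_irrelevance.
Qed.

Lemma mkfi_eq a b (fa : finitary a) (fb : finitary b) :
  mkfi fa = mkfi fb <-> ser_eq a b.
Proof.
split=> [E|E]; last by apply: fi_ext => x y xy; rewrite !mkfiE // E.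
by move=> x y xy; rewrite -(mkfiE fa) // -(mkfiE fb) // E.
Qed.

Lemma mkfi_fval (p : fi) : mkfi (fval_finitary p) = p.
Proof. exact: fi_ext (mkfiE _). Qed.

HB.instance Definition _ := gen_eqMixin fi.
HB.instance Definition _ := gen_choiceMixin fi.

Definition fi_zero := mkfi (diagonal_finitary ser0_diagonal).
Definition fi_one := mkfi (diagonal_finitary ser1_diagonal).
Definition fi_add (p q : fi) :=
  mkfi (ser_add_finitary (fval_finitary p) (fval_finitary q)).
Definition fi_opp (p : fi) := mkfi (ser_opp_finitary (fval_finitary p)).
Definition fi_mul (p q : fi) := mkfi (conv_finitary (fval_finitary p) (fval_finitary q)).

Lemma fi_addA : associative fi_add.
Proof. by move=> p q r; apply/mkfi_eq => x y xy; rewrite /ser_add !mkfiE // addrA. Qed.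

Lemma fi_addC : commutative fi_add.
Proof. by move=> p q; apply/mkfi_eq => x y xy; rewrite /ser_add addrC. Qed.

Lemma fi_add0 : left_id fi_zero fi_add.
Proof.
by move=> p; apply: fi_ext => x y xy; rewrite !mkfiE // /ser_add mkfiE // add0r.
Qed.

Lemma fi_addN : left_inverse fi_zero fi_opp fi_add.
Proof.
by move=> p; apply/mkfi_eq => x y xy; rewrite /ser_add mkfiE // addNr.
Qed.

HB.instance Definition _ := GRing.isZmodule.Build fi fi_addA fi_addC fi_add0 fi_addN.

Lemma mkfi_mul a b (fa : finitary a) (fb : finitary b) :
  fi_mul (mkfi fa) (mkfi fb) = mkfi (conv_finitary fa fb).
Proof. by apply/mkfi_eq/conv_eq; [exact: fval_finitary | exact: mkfiE..]. Qed.

Lemma fi_mulA : associative fi_mul.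
Proof.
move=> p q r; rewrite -(mkfi_fval p) -(mkfi_fval q) -(mkfi_fval r) !mkfi_mul.
by apply/mkfi_eq/ser_eq_sym/convA; apply: fval_finitary.
Qed.

Lemma fi_mul1 : left_id fi_one fi_mul.
Proof.
move=> p; rewrite /fi_one -[p]mkfi_fval mkfi_mul; apply/mkfi_eq => x y xy.
by rewrite (conv_diagl _ ser1_diagonal xy) /ser1 eqxx mul1r.
Qed.

Lemma fi_mulr1 : right_id fi_one fi_mul.
Proof.
move=> p; rewrite /fi_one -[p]mkfi_fval mkfi_mul; apply/mkfi_eq => x y xy.
by rewrite (conv_diagr _ ser1_diagonal xy) /ser1 eqxx mulr1.
Qed.

Lemma fi_mulDl : left_distributive fi_mul fi_add.
Proof.
move=> p q r; apply/mkfi_eq.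
apply: ser_eq_trans (conv_eq _ (mkfiE _) (fun _ _ _ => erefl)) _.
  exact: fval_finitary.
apply: ser_eq_trans (conv_addl _ (fval_finitary _) (fval_finitary _)) _.
by move=> x y xy; rewrite /ser_add !mkfiE.
Qed.

Lemma fi_mulDr : right_distributive fi_mul fi_add.
Proof.
move=> p q r; apply/mkfi_eq.
apply: ser_eq_trans (conv_eq _ (fun _ _ _ => erefl) (mkfiE _)) _.
  exact: fval_finitary.
apply: ser_eq_trans (conv_addr _ _ (fval_finitary _)) _.
by move=> x y xy; rewrite /ser_add !mkfiE.
Qed.

HB.instance Definition _ :=
  GRing.Zmodule_isPzRing.Build fi fi_mulA fi_mul1 fi_mulr1 fi_mulDl fi_mulDr.

End FIRing.

Section FIAlgebra.
Variables (d : Order.disp_t) (P : porderType d) (K : fieldType).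
Implicit Types (a b : ser P K) (p q : fi P K) (x y u v : P).

Lemma mkfi_mulE a b (fa : finitary a) (fb : finitary b) :
  mkfi fa * mkfi fb = mkfi (conv_finitary fa fb).
Proof. exact: mkfi_mul. Qed.

Lemma mkfi0 : mkfi (diagonal_finitary (@ser0_diagonal _ P K)) = 0.
Proof. by []. Qed.

Lemma mkfi1 : mkfi (diagonal_finitary (@ser1_diagonal _ P K)) = 1.
Proof. by []. Qed.

Lemma fi_mulE p q : ser_eq (fval (p * q)) (conv (fval p) (fval q)).
Proof. exact: mkfiE. Qed.

Lemma fi_addE p q u v : (u <= v)%O -> fval (p + q) u v = fval p u v + fval q u v.
Proof. exact: mkfiE. Qed.

Lemma fi_subE p q u v : (u <= v)%O -> fval (p - q) u v = fval p u v - fval q u v.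
Proof. by move=> uv; rewrite fi_addE //; congr (_ + _); apply: mkfiE. Qed.

Lemma fi_zeroE u v : (u <= v)%O -> fval (0 : fi P K) u v = 0.
Proof. exact: mkfiE. Qed.

Lemma fi_oneE u v : (u <= v)%O -> fval (1 : fi P K) u v = if u == v then 1 else 0.
Proof. exact: mkfiE. Qed.

Lemma mkfi_diagonal a (fa : finitary a) : diagonal a -> diagonal (fval (mkfi fa)).
Proof. by move=> da x y xy; rewrite /= /normalize da ?if_same. Qed.

Lemma mul_diag_entry p q x : fval (p * q) x x = fval p x x * fval q x x.
Proof. by rewrite fi_mulE // conv_diag_entry. Qed.

Lemma mul_diagl p q u v : diagonal (fval p) -> (u <= v)%O ->
  fval (p * q) u v = fval p u u * fval q u v.
Proof. by move=> dp uv; rewrite fi_mulE // conv_diagl. Qed.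

Lemma mul_diagr p q u v : diagonal (fval q) -> (u <= v)%O ->
  fval (p * q) u v = fval p u v * fval q v v.
Proof. by move=> dq uv; rewrite fi_mulE // conv_diagr. Qed.

Lemma fval_exprS p k : ser_eq (fval (p ^+ k.+1)) (conv (fval p) (fval (p ^+ k))).
Proof. by rewrite exprS; apply: fi_mulE. Qed.

Lemma fval_exprSr p k : ser_eq (fval (p ^+ k.+1)) (conv (fval (p ^+ k)) (fval p)).
Proof. by rewrite exprSr; apply: fi_mulE. Qed.

End FIAlgebra.

(* Writing such an element as 1 - nu with nu zero on the diagonal, on an
   interval [x, y] a nonzero entry of nu^k needs a strict chain of length k
   through the finite cover of nu on [x, y], so the geometric series
   sum_k nu^k is entrywise a finite sum and inverts 1 - nu. *)
Section UnipotentInverse.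
Variables (d : Order.disp_t) (P : porderType d) (K : fieldType).
Local Notation fi := (fi P K).
Variable nu : fi.
Hypothesis nu_diag0 : forall x, fval nu x x = 0.

(* A nonzero entry (u, v) of nu^k yields a strict chain u < w_1 < ... of
   length k in the cover S, so k is at most the number of points of S in (u, v]. *)
Lemma pow_chain_length x y S : covers (fval nu) x y S -> forall k u v,
  (x <= u)%O -> (u <= v)%O -> (v <= y)%O -> fval (nu ^+ k) u v != 0 ->
  (k <= count (fun t => (u < t <= v)%O) (undup S))%N.
Proof.
move=> HS; elim=> // k IH u v xu uv vy.
rewrite (fval_exprS _ _ uv) => /(conv_neq0 (fval_finitary nu)) [w [uw wv nuw nwv]].
have uw' : (u < w)%O by rewrite lt_def uw andbT; apply: contraNneq nuw => ->; rewrite nu_diag0.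
apply: leq_ltn_trans (IH w v (le_trans xu uw) wv vy nwv) _.
apply: (count_lt_sub (w := w)).
- by move=> t /andP[wt ->]; rewrite (lt_trans uw' wt).
- by rewrite mem_undup; have /andP[] := HS u w xu uw' (le_trans wv vy) nuw.
- by rewrite uw' wv.
- by rewrite ltxx.
Qed.

Lemma pow_vanish x y S k u v : covers (fval nu) x y S -> (x <= u)%O ->
  (u <= v)%O -> (v <= y)%O -> (size (undup S) < k)%N -> fval (nu ^+ k) u v = 0.
Proof.
move=> HS xu uv vy; apply: contraTeq => nz; rewrite -leqNgt.
exact: leq_trans (pow_chain_length HS xu uv vy nz) (count_size _ _).
Qed.

Definition vanishing_index x y : nat :=
  epsilon (inhabits 0%N) (fun m => forall k, (m <= k)%N -> fval (nu ^+ k) x y = 0).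

Definition geom : ser P K :=
  fun x y => \sum_(0 <= k < vanishing_index x y) fval (nu ^+ k) x y.

Lemma geomE x y n : (forall k, (n <= k)%N -> fval (nu ^+ k) x y = 0) ->
  geom x y = \sum_(0 <= k < n) fval (nu ^+ k) x y.
Proof.
move=> n_vanish; apply: (sum_nat_trunc _ n_vanish).
rewrite /vanishing_index; apply: (epsilon_spec (inhabits 0%N) (fun m => forall k, (m <= k)%N -> _)).
by exists n.
Qed.

Lemma geom_finitary : finitary geom.
Proof.
apply: cover_finitary => x y; have [S HS] := finitary_cover x y (fval_finitary nu).
exists S => u v xu uv vy; have uv' := ltW uv.
rewrite (@geomE u v (size (undup S)).+1); last by move=> k; apply: (pow_vanish HS).
case/sum_neq0_witness => -[|k] [_ _ nzk].
  by move: nzk; rewrite expr0 fi_oneE // (lt_eqF uv) eqxx.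
apply/andP; split.
  move: nzk; rewrite (fval_exprS _ _ uv') => /(conv_neq0 (fval_finitary nu)).
  case=> w [uw wv nuw _]; have uw' : (u < w)%O.
    by rewrite lt_def uw andbT; apply: contraNneq nuw => ->; rewrite nu_diag0.
  by have /andP[] := HS u w xu uw' (le_trans wv vy) nuw.
move: nzk; rewrite (fval_exprSr _ _ uv') => /(conv_neq0 (fval_finitary _)).
case=> w [uw wv _ nwv]; have wv' : (w < v)%O.
  by rewrite lt_def wv andbT eq_sym; apply: contraNneq nwv => ->; rewrite nu_diag0.
by have /andP[] := HS w v (le_trans xu uw) wv' vy nwv.
Qed.

Definition geom_fi : fi := mkfi geom_finitary.

Lemma mul_geom_l : nu * geom_fi = geom_fi - 1.
Proof.
apply/fi_ext => x y xy; have [S HS] := finitary_cover x y (fval_finitary nu).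
set N := (size (undup S)).+1.
have vanish u v n : (x <= u)%O -> (u <= v)%O -> (v <= y)%O -> (N <= n)%N ->
  fval (nu ^+ n) u v = 0 by move=> *; apply: (pow_vanish HS).
rewrite fi_mulE // (conv_eq (fval_finitary nu) (fun _ _ _ => erefl) (mkfiE _) xy).
rewrite (conv_suml _ HS) fi_subE // mkfiE //.
rewrite (@geomE x y N.+1) => [|k /ltnW]; last exact: vanish.
rewrite big_nat_recl // expr0 addrAC subrr add0r.
transitivity (\sum_(w <- undup (x :: S) | (x <= w <= y)%O)
                \sum_(0 <= k < N) fval nu x w * fval (nu ^+ k) w y).
  apply: eq_bigr => w /andP[xw wy]; rewrite (@geomE w y N) ?big_distrr //.
  by move=> k; apply: vanish.
rewrite exchange_big; apply: eq_bigr => k _.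
by rewrite (fval_exprS _ _ xy) (conv_suml _ HS).
Qed.

Lemma mul_geom_r : geom_fi * nu = geom_fi - 1.
Proof.
apply/fi_ext => x y xy; have [S HS] := finitary_cover x y (fval_finitary nu).
set N := (size (undup S)).+1.
have vanish u v n : (x <= u)%O -> (u <= v)%O -> (v <= y)%O -> (N <= n)%N ->
  fval (nu ^+ n) u v = 0 by move=> *; apply: (pow_vanish HS).
rewrite fi_mulE // (conv_eq (fval_finitary _) (mkfiE _) (fun _ _ _ => erefl) xy).
rewrite (conv_sumr _ HS) fi_subE // mkfiE //.
rewrite (@geomE x y N.+1) => [|k /ltnW]; last exact: vanish.
rewrite big_nat_recl // expr0 addrAC subrr add0r.
transitivity (\sum_(w <- undup (y :: S) | (x <= w <= y)%O)
                \sum_(0 <= k < N) fval (nu ^+ k) x w * fval nu w y).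
  apply: eq_bigr => w /andP[xw wy]; rewrite (@geomE x w N) ?big_distrl //.
  by move=> k; apply: vanish.
rewrite exchange_big; apply: eq_bigr => k _.
by rewrite (fval_exprSr _ _ xy) (conv_sumr _ HS).
Qed.

End UnipotentInverse.

Lemma unipotent_unit (d : Order.disp_t) (P : porderType d) (K : fieldType)
    (p : fi P K) :
  (forall x, fval p x x = 1) -> exists q, p * q = 1 /\ q * p = 1.
Proof.
move=> p_diag1; pose nu := 1 - p.
have nu_diag0 x : fval nu x x = 0 by rewrite fi_subE // fi_oneE // eqxx p_diag1 subrr.
have -> : p = 1 - nu by rewrite opprB addrC subrK.
exists (geom_fi nu_diag0); split.
  by rewrite mulrBl mul1r mul_geom_l opprB addrC subrK.
by rewrite mulrBr mulr1 mul_geom_r opprB addrC subrK.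
Qed.

Section RingIdempotents.
Variable R : pzRingType.
Implicit Types a b e f g : R.

Definition primitive_idem e : Prop :=
  [/\ e * e = e, e != 0 &
      forall f, f * f = f -> f * e = f -> e * f = f -> f = 0 \/ f = e].

(* Conjugation by a unit preserves primitivity: an idempotent f below
   g a b is conjugated back to the idempotent b f g below a. *)
Lemma primitive_conj g b a : g * b = 1 -> b * g = 1 ->
  primitive_idem a -> primitive_idem (g * a * b).
Proof.
move=> gb bg [aa a0 a_prim].
have conjM x y : g * x * b * (g * y * b) = g * (x * y) * b.
  by rewrite !mulrA -(mulrA _ b g) bg mulr1.
have unconjM x y : b * x * g * (b * y * g) = b * (x * y) * g.
  by rewrite !mulrA -(mulrA _ g b) gb mulr1.
have conjK x : b * (g * x * b) * g = x.
  by rewrite !mulrA bg mul1r -mulrA bg mulr1.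
have unconjK x : g * (b * x * g) * b = x.
  by rewrite !mulrA gb mul1r -mulrA gb mulr1.
split; first by rewrite conjM aa.
  by apply: contraNneq a0 => gab0; rewrite -(conjK a) gab0 mulr0 mul0r.
move=> f ff fa af.
have f_idem : b * f * g * (b * f * g) = b * f * g by rewrite unconjM ff.
have f_le_a : b * f * g * a = b * f * g.
  by rewrite -{2}fa !mulrA -(mulrA _ b g) bg mulr1.
have a_le_f : a * (b * f * g) = b * f * g by rewrite -{2}af !mulrA bg mul1r.
case: (a_prim _ f_idem f_le_a a_le_f) => E; [left | right].
  by rewrite -(unconjK f) E mulr0 mul0r.
by rewrite -(unconjK f) E.
Qed.

(* For idempotents a and e, b := e a + (1 - e)(1 - a) satisfies b a = e a = e b;
   hence when b is a unit, a and e are conjugate. *)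
Lemma idem_conj_by g b a e : a * a = a -> e * e = e ->
  b = e * a + (1 - e) * (1 - a) -> g * b = 1 -> b * g = 1 ->
  a = g * e * b /\ e = b * a * g.
Proof.
move=> aa ee bE gb bg.
have a_ortho : (1 - a) * a = 0 by rewrite mulrBl mul1r aa subrr.
have e_ortho : e * (1 - e) = 0 by rewrite mulrBr mulr1 ee subrr.
have ba : b * a = e * a.
  by rewrite bE [(_ + _) * a]mulrDl -!mulrA aa a_ortho mulr0 addr0.
have eb : e * b = e * a.
  by rewrite bE [e * (_ + _)]mulrDr !mulrA ee e_ortho mul0r addr0.
split; first by rewrite -mulrA eb -ba mulrA gb mul1r.
by rewrite ba -eb -mulrA bg mulr1.
Qed.

End RingIdempotents.

Section FIIdempotents.
Variables (d : Order.disp_t) (P : porderType d) (K : fieldType).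
Local Notation fi := (fi P K).
Implicit Types (a : ser P K) (p f : fi) (x u v : P).

Lemma idem_scalar (r : K) : r * r = r -> r = 0 \/ r = 1.
Proof.
move=> rr; have [->|r0] := eqVneq r 0; [by left | right].
by apply: (mulfI r0); rewrite rr mulr1.
Qed.

Lemma idem_diag_entry p x : p * p = p -> fval p x x = 0 \/ fval p x x = 1.
Proof. by move=> pp; apply: idem_scalar; rewrite -mul_diag_entry pp. Qed.

Definition diag_part a : ser P K := fun u v => if u == v then a u u else 0.

Lemma diag_part_diagonal a : diagonal (diag_part a).
Proof. by move=> u v /negbTE; rewrite /diag_part => ->. Qed.

Definition fdiag p : fi := mkfi (diagonal_finitary (diag_part_diagonal (fval p))).
Definition fdelta x : fi := mkfi (diagonal_finitary (delta_diagonal K x)).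

Lemma fdiag_diagonal p : diagonal (fval (fdiag p)).
Proof. exact/mkfi_diagonal/diag_part_diagonal. Qed.

Lemma fdelta_diagonal x : diagonal (fval (fdelta x)).
Proof. exact/mkfi_diagonal/delta_diagonal. Qed.

Lemma fdiagE p u : fval (fdiag p) u u = fval p u u.
Proof. by rewrite mkfiE // /diag_part eqxx. Qed.

Lemma fdeltaE x u v : (u <= v)%O -> fval (fdelta x) u v = delta K x u v.
Proof. exact: mkfiE. Qed.

Lemma fdiag_idem p : p * p = p -> fdiag p * fdiag p = fdiag p.
Proof.
move=> pp; apply: fi_ext => u v uv; rewrite (mul_diagl _ (fdiag_diagonal p) uv).
have [<-|uv'] := eqVneq u v; last by rewrite (fdiag_diagonal _ uv') mulr0.
by rewrite !fdiagE -mul_diag_entry pp.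
Qed.

Lemma fdelta_absorb x p : diagonal (fval p) -> fval p x x = 1 ->
  fdelta x * p = fdelta x /\ p * fdelta x = fdelta x.
Proof.
move=> dp px; split; apply: fi_ext => u v uv.
  rewrite (mul_diagr _ dp uv); have [->|vx] := eqVneq v x; first by rewrite px mulr1.
  by rewrite fdeltaE // /delta (negbTE vx) andbF mul0r.
rewrite (mul_diagl _ dp uv); have [->|ux] := eqVneq u x; first by rewrite px mul1r.
by rewrite fdeltaE // /delta (negbTE ux) mulr0.
Qed.

Lemma fdelta_xx x : fval (fdelta x) x x = 1.
Proof. by rewrite fdeltaE // /delta eqxx. Qed.

Lemma fdelta_idem x : fdelta x * fdelta x = fdelta x.
Proof. exact: (fdelta_absorb (fdelta_diagonal x) (fdelta_xx x)).1. Qed.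

Lemma fdelta_neq0 x : fdelta x != 0.
Proof.
apply/eqP => /(congr1 (fun p => fval p x x))/eqP.
by rewrite fdelta_xx fi_zeroE // oner_eq0.
Qed.

(* delta_x FI(P) delta_x = K delta_x, whose only idempotents are 0 and
   delta_x: so delta_x is primitive. *)
Lemma fdelta_primitive x : primitive_idem (fdelta x).
Proof.
split; [exact: fdelta_idem | exact: fdelta_neq0 |] => f ff fx xf.
have fE u v : (u <= v)%O -> fval f u v = fval f x x * delta K x u v.
  move=> uv; rewrite -[in LHS]fx -[in LHS]xf (mul_diagr _ (fdelta_diagonal x) uv).
  rewrite (mul_diagl _ (fdelta_diagonal x) uv) !fdeltaE // /delta.
  by case: (u =P x) => [->|_]; case: (v =P x) => [->|_]; rewrite /= ?mul1r ?mulr1 ?mulr0 ?mul0r.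
have [f0|f1] := idem_diag_entry x ff.
  by left; apply: fi_ext => u v uv; rewrite fE // f0 mul0r fi_zeroE.
by right; apply: fi_ext => u v uv; rewrite fE // f1 mul1r fdeltaE.
Qed.

Lemma diagonal_primitive p : diagonal (fval p) -> primitive_idem p ->
  exists x, p = fdelta x.
Proof.
move=> dp [pp p0 p_prim].
have [[x px]|no_diag] := pselect (exists x, fval p x x != 0); last first.
  case/eqP: p0; apply: fi_ext => u v uv; rewrite fi_zeroE //.
  have [<-|/dp //] := eqVneq u v.
  by apply/eqP; apply: contrapT => pu; apply: no_diag; exists u; apply/negP.
have px1 : fval p x x = 1.
  by case: (idem_diag_entry x pp) => // p0'; rewrite p0' eqxx in px.
have [xp px'] := fdelta_absorb dp px1.
exists x; case: (p_prim _ (fdelta_idem x) xp px') => // E.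
by case/eqP: (fdelta_neq0 x).
Qed.

(* Every idempotent p of FI(P) is conjugate to its diagonal part e:
   b := e p + (1 - e)(1 - p) has all diagonal entries 1, hence is a unit. *)
Lemma idem_conj_fdiag p : p * p = p ->
  exists g b, [/\ g * b = 1, b * g = 1 & p = g * fdiag p * b /\ fdiag p = b * p * g].
Proof.
move=> pp; set e := fdiag p; set b := e * p + (1 - e) * (1 - p).
have b_diag1 u : fval b u u = 1.
  have r2 := mul_diag_entry p p u; rewrite pp in r2.
  rewrite fi_addE // !mul_diag_entry !fi_subE // fi_oneE // eqxx fdiagE.
  by rewrite mulrBr mulr1 mulrBl mul1r -r2 subrr subr0 addrC subrK.
have [g [bg gb]] := unipotent_unit b_diag1.
by exists g, b; split => //; apply: idem_conj_by (fdiag_idem pp) _ gb bg.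
Qed.

Lemma primitive_fi_conj p : p * p = p ->
  primitive_idem p <-> exists x g b, [/\ g * b = 1, b * g = 1 & p = g * fdelta x * b].
Proof.
move=> pp; split=> [p_prim|[x [g [b [gb bg ->]]]]]; last first.
  exact/primitive_conj/fdelta_primitive.
have [g [b [gb bg [pE eE]]]] := idem_conj_fdiag pp.
have e_prim : primitive_idem (fdiag p) by rewrite eE; apply: primitive_conj.
have [x ex] := diagonal_primitive (fdiag_diagonal p) e_prim.
by exists x, g, b; rewrite -ex.
Qed.

End FIIdempotents.

Section Translation.
Variables (d : Order.disp_t) (P : porderType d) (K : fieldType).
Implicit Types (a b c : ser P K).

Lemma mkfi_mul_eq a b c (fa : finitary a) (fb : finitary b) (fc : finitary c) :
  mkfi fa * mkfi fb = mkfi fc <-> ser_eq (conv a b) c.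
Proof. by rewrite mkfi_mulE; apply: mkfi_eq. Qed.

Lemma mkfi_eq0 a (fa : finitary a) : mkfi fa = 0 <-> ser_eq a (@ser0 _ P K).
Proof. by rewrite -mkfi0; apply: mkfi_eq. Qed.

Lemma inverse_ofE b c (fb : finitary b) (fc : finitary c) :
  inverse_of b c <-> mkfi fb * mkfi fc = 1 /\ mkfi fc * mkfi fb = 1.
Proof.
rewrite -mkfi1 !mkfi_mul_eq.
by split=> [[_ _ bc cb]|[bc cb]]; split.
Qed.

Lemma primitiveE a (fa : finitary a) : fi_primitive a <-> primitive_idem (mkfi fa).
Proof.
have idemE (e : ser P K) (fe : finitary e) : fi_idempotent e <-> mkfi fe * mkfi fe = mkfi fe.
  by rewrite mkfi_mul_eq; split=> [[]|ee]...
split=> [[/idemE aa a0 a_prim] | [/idemE aa a0 a_prim]]; split=> //.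
- by apply/eqP => /mkfi_eq0.
- move=> f; rewrite -(mkfi_fval f) => /idemE ff; rewrite !mkfi_mul_eq => fa' af.
  by case: (a_prim _ ff fa' af) => [/mkfi_eq0|/mkfi_eq] ->; [left | right].
- by move=> /mkfi_eq0 a0'; rewrite a0' eqxx in a0.
- move=> e [fe ee] ea ae.
  have := a_prim (mkfi fe); rewrite !mkfi_mul_eq => /(_ ee ea ae).
  by case=> [/mkfi_eq0|/mkfi_eq] E; [left | right].
Qed.

End Translation.

Theorem lemma1 (d : Order.disp_t) (P : porderType d) (K : fieldType) :
  (forall a : ser P K, fi_idempotent a ->
     (fi_primitive a <->
      exists (x : P) (b binv : ser P K),
        inverse_of b binv /\ ser_eq a (conv (conv binv (delta K x)) b)))
  /\
  (forall a : ser P K, finitary a -> diagonal a ->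
     (fi_primitive a <-> exists x : P, ser_eq a (delta K x))).
Proof.
split=> [a [fa aa] | a fa da]; rewrite (primitiveE fa).
- have fdeltaF x : fdelta K x = mkfi (diagonal_finitary (delta_diagonal K x)) by [].
  rewrite (primitive_fi_conj (proj2 (mkfi_mul_eq fa fa fa) aa)).
  split=> [[x [g [b [gb bg aE]]]] | [x [b [c [bc aE]]]]].
    exists x, (fval b), (fval g).
    rewrite (inverse_ofE (fval_finitary b) (fval_finitary g)) !mkfi_fval.
    rewrite -(mkfi_fval g) -(mkfi_fval b) fdeltaF !mkfi_mulE in aE.
    by split=> //; move/mkfi_eq: aE.
  have [fb fc _ _] := bc; move: bc; rewrite (inverse_ofE fb fc) => -[bc cb].
  exists x, (mkfi fc), (mkfi fb); split=> //.
  by rewrite fdeltaF !mkfi_mulE; apply/mkfi_eq.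
- split=> [/(diagonal_primitive (mkfi_diagonal fa da)) [x /mkfi_eq aE] | [x aE]].
    by exists x.
  by rewrite (_ : mkfi fa = fdelta K x); [apply: fdelta_primitive | apply/mkfi_eq].
Qed.
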